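(* Let $(a^*,b^* ),(c^*,d^* )$ be a pair of distinct corners maximizing $\min_\pi f_{abcd}(\pi)$ over all pairs of distinct corners, and let $\pi_{a^*b^*c^*d^*}$ be the minimizer of $f_{a^*b^*c^*d^*}$. Then $\pi^*=\pi_{a^*b^*c^*d^*}$ is the (unique) solution of the minimax problem $$\min_{\pi\in\mathbb R}\max_{(\mu,\sigma)\in D}F(\pi,\mu,\sigma).$$
   Context: Let $0<\mu_-<\mu_+$ and $0<\sigma_-<\sigma_+$ be real numbers, $D=[\mu_-,\mu_+]\times[\sigma_-,\sigma_+]$, and $h_0,h_1\in\mathbb R$. For $\pi\in\mathbb R$ and $(\mu,\sigma)\in D$ put $F(\pi,\mu,\sigma)=(h_0-\pi\mu)^2+(h_1-\pi\sigma)^2$. For corners $(a,b),(c,d)\in\{-,+\}^2$ let $f_{ab}(\pi)=F(\pi,\mu_a,\sigma_b)$ and $f_{abcd}(\pi)=\max(f_{ab}(\pi),f_{cd}(\pi))$. *)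

From Stdlib Require Import Reals.
Open Scope R_scope.

Definition F (h0 h1 pi mu sigma : R) : R :=
  (h0 - pi * mu) ^ 2 + (h1 - pi * sigma) ^ 2.

(* A sign in {-,+} is encoded as a bool: false = '-', true = '+'. *)
Definition pick (b : bool) (lo hi : R) : R := if b then hi else lo.

(* A corner (a,b) of D = [mu_-,mu_+] x [sigma_-,sigma_+]. *)
Definition corner := (bool * bool)%type.

Definition f_corner (mum mup sgm sgp h0 h1 : R) (c : corner) (pi : R) : R :=
  F h0 h1 pi (pick (fst c) mum mup) (pick (snd c) sgm sgp).

Definition f_pair (mum mup sgm sgp h0 h1 : R) (c1 c2 : corner) (pi : R) : R :=
  Rmax (f_corner mum mup sgm sgp h0 h1 c1 pi) (f_corner mum mup sgm sgp h0 h1 c2 pi).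

Definition is_minimizer (g : R -> R) (x : R) : Prop := forall y, g x <= g y.

Definition is_max_over_D (mum mup sgm sgp h0 h1 pi v : R) : Prop :=
  (exists mu sigma, mum <= mu <= mup /\ sgm <= sigma <= sgp /\ F h0 h1 pi mu sigma = v) /\
  (forall mu sigma, mum <= mu <= mup -> sgm <= sigma <= sgp -> F h0 h1 pi mu sigma <= v).

From Stdlib Require Import Reals Lra Psatz.
Open Scope R_scope.

(* For fixed (mu, sigma), pi |-> F(pi,mu,sigma) is a convex quadratic, strictly
   convex since mu > 0.  Hence every corner function f_k has interval sublevel
   sets (quasiconvexity), and every pair maximum f_abcd is strictly midpoint
   convex, coercive and continuous, so it has exactly one minimizer.
   The heart of the argument is a "third function" lemma: if pistar is the unique
   point where f_{cs1} and f_{cs2} are both <= m, and for some p1, p2 the corner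
   function f_k is <= m together with f_{cs1} at p1 and with f_{cs2} at p2, then
   f_k(pistar) <= m (a case analysis on the relative order of pistar, p1, p2).
   Applied with the minimizers p1, p2 of f_{k,cs1}, f_{k,cs2} and the maximality
   of the pair (cs1,cs2), this shows that every corner is <= m at pistar.  Since on
   D the function F(pi,.,.) is dominated by its values at the corners, the
   maximum over D at pistar equals m, while at any other pi it is at least
   f_{cs1 cs2}(pi) > m. *)

Definition between (z a b : R) : Prop := a <= z <= b \/ b <= z <= a.

Definition quasiconvex (g : R -> R) : Prop :=
  forall a z b m, between z a b -> g a <= m -> g b <= m -> g z <= m.

Definition strictly_midconvex (g : R -> R) : Prop :=
  forall a b, a <> b -> 2 * g ((a + b) / 2) < g a + g b.

Lemma between_trichotomy x y z : between x y z \/ between y x z \/ between z x y.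
Proof.
  unfold between.
  destruct (Rle_dec x y), (Rle_dec y z), (Rle_dec x z).
  all: first [ left; left; lra | left; right; lra | right; left; left; lra
             | right; left; right; lra | right; right; left; lra
             | right; right; right; lra ].
Qed.

(* Each F(., mu, sigma) is quasiconvex, by the convex-combination identity for
   the quadratic pi |-> F(pi, mu, sigma). *)
Lemma F_quasiconvex h0 h1 mu sg : quasiconvex (fun p => F h0 h1 p mu sg).
Proof.
  intros a z b m Hz Ha Hb; simpl in *.
  assert (E : (b - z) * F h0 h1 a mu sg + (z - a) * F h0 h1 b mu sg
              - (b - a) * F h0 h1 z mu sg
              = (mu ^ 2 + sg ^ 2) * ((b - a) * (z - a) * (b - z))) by (unfold F; ring).
  assert (Hc : 0 <= mu ^ 2 + sg ^ 2) by nra.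
  destruct (Req_dec a b) as [<- | Hab].
  - replace z with a by (unfold between in Hz; lra); exact Ha.
  - destruct Hz as [Hz | Hz].
    + assert (0 <= (b - a) * (z - a) * (b - z)) by (repeat apply Rmult_le_pos; lra).
      assert (0 < b - a) by lra. nra.
    + assert (0 <= (a - b) * (z - b) * (a - z)) by (repeat apply Rmult_le_pos; lra).
      assert (0 < a - b) by lra. nra.
Qed.

Lemma F_strictly_midconvex h0 h1 mu sg :
  0 < mu -> strictly_midconvex (fun p => F h0 h1 p mu sg).
Proof.
  intros Hmu a b Hab; simpl.
  assert (E : F h0 h1 a mu sg + F h0 h1 b mu sg - 2 * F h0 h1 ((a + b) / 2) mu sg
              = (mu ^ 2 + sg ^ 2) * (a - b) ^ 2 / 2) by (unfold F; field).
  assert (0 < (a - b) ^ 2).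
  { assert (a - b <> 0) by lra. simpl; rewrite Rmult_1_r. now apply Rsqr_pos_lt. }
  assert (0 < (mu ^ 2 + sg ^ 2) * (a - b) ^ 2) by (apply Rmult_lt_0_compat; nra).
  lra.
Qed.

Lemma Rmax_strictly_midconvex g1 g2 :
  strictly_midconvex g1 -> strictly_midconvex g2 ->
  strictly_midconvex (fun x => Rmax (g1 x) (g2 x)).
Proof.
  intros H1 H2 a b Hab; simpl.
  specialize (H1 a b Hab); specialize (H2 a b Hab).
  pose proof (Rmax_l (g1 a) (g2 a)); pose proof (Rmax_r (g1 a) (g2 a)).
  pose proof (Rmax_l (g1 b) (g2 b)); pose proof (Rmax_r (g1 b) (g2 b)).
  apply Rmax_case with (P := fun v => 2 * v < _); lra.
Qed.

Lemma midconvex_minimizer_unique g p x :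
  strictly_midconvex g -> is_minimizer g p -> g x <= g p -> x = p.
Proof.
  intros Hg Hp Hx.
  destruct (Req_dec x p) as [| Hne]; [assumption | exfalso].
  specialize (Hg x p Hne); specialize (Hp ((x + p) / 2)); lra.
Qed.

Lemma continuity_pt_Rmax f g x :
  continuity_pt f x -> continuity_pt g x -> continuity_pt (fun p => Rmax (f p) (g p)) x.
Proof.
  intros Hf Hg.
  apply continuity_pt_locally_ext
    with (f := fun p => (f p + g p + Rabs (f p - g p)) / 2) (a := 1); [lra | |].
  - intros y _. unfold Rmax, Rabs.
    destruct (Rle_dec (f y) (g y)), (Rcase_abs (f y - g y)); lra.
  - apply continuity_pt_div; [| apply continuity_pt_const; intros ? ?; reflexivity | lra].
    apply continuity_pt_plus; [apply continuity_pt_plus; assumption |].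
    apply (continuity_pt_comp (fun p => f p - g p) Rabs);
      [apply continuity_pt_minus; assumption | apply Rcontinuity_abs].
Qed.

(* A continuous function that exceeds h 0 outside a bounded interval attains
   its infimum (extreme value theorem on [-|M|, |M|]). *)
Lemma coercive_minimizer_exists (h : R -> R) (M : R) :
  (forall x, continuity_pt h x) -> (forall x, M < Rabs x -> h 0 <= h x) ->
  exists p, is_minimizer h p.
Proof.
  intros Hc Hout.
  pose proof (Rabs_pos M) as HM; pose proof (Rle_abs M).
  destruct (continuity_ab_min h (- Rabs M) (Rabs M)) as [p [Hp _]];
    [lra | intros; apply Hc |].
  exists p; intros y.
  assert (Hp0 : h p <= h 0) by (apply Hp; lra).
  destruct (Rle_dec (Rabs y) (Rabs M)) as [Hy | Hy].
  - apply Hp. pose proof (Rle_abs y); pose proof (Rle_abs (- y)).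
    rewrite Rabs_Ropp in *; lra.
  - apply Rle_trans with (h 0); [exact Hp0 | apply Hout; lra].
Qed.

Lemma square_coercive c mu t x :
  0 < mu -> 0 <= t -> (Rabs c + t + 1) / mu < Rabs x -> t <= (c - x * mu) ^ 2.
Proof.
  intros Hmu Ht Hx.
  assert (Hxm : Rabs c + t + 1 < Rabs (x * mu)).
  { rewrite Rabs_mult, (Rabs_right mu) by lra.
    apply Rmult_lt_compat_r with (r := mu) in Hx; [| lra].
    unfold Rdiv in Hx; rewrite Rmult_assoc, Rinv_l in Hx; lra. }
  pose proof (Rabs_triang_inv (x * mu) c) as Htri.
  rewrite Rabs_minus_sym in Htri.
  rewrite <- pow2_abs. nra.
Qed.

Lemma pick_between b lo hi : lo < hi -> lo <= pick b lo hi <= hi.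
Proof. destruct b; simpl; lra. Qed.

Lemma pick_pos b lo hi : 0 < lo -> lo < hi -> 0 < pick b lo hi.
Proof. destruct b; simpl; lra. Qed.

Section PairMaxima.

Variables mum mup sgm sgp h0 h1 : R.
Hypothesis Hmu0 : 0 < mum.
Hypothesis Hmu : mum < mup.

Let fc := f_corner mum mup sgm sgp h0 h1.
Let fp := f_pair mum mup sgm sgp h0 h1.

Lemma f_corner_quasiconvex k : quasiconvex (fc k).
Proof. apply F_quasiconvex. Qed.

Lemma f_pair_strictly_midconvex c1 c2 : strictly_midconvex (fp c1 c2).
Proof.
  apply Rmax_strictly_midconvex; apply F_strictly_midconvex, pick_pos; assumption.
Qed.

Lemma f_pair_minimizer_exists c1 c2 : exists p, is_minimizer (fp c1 c2) p.
Proof.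
  set (mu := pick (fst c1) mum mup).
  assert (Hpos : 0 < mu) by (apply pick_pos; assumption).
  assert (H0 : 0 <= fp c1 c2 0).
  { unfold fp, f_pair, f_corner, F. eapply Rle_trans; [| apply Rmax_l]. nra. }
  apply (coercive_minimizer_exists _ ((Rabs h0 + fp c1 c2 0 + 1) / mu)).
  - intros x. apply continuity_pt_Rmax; unfold f_corner, F; reg.
  - intros x Hx. unfold fp at 2, f_pair, f_corner, F.
    eapply Rle_trans; [| apply Rmax_l].
    pose proof (square_coercive h0 mu _ x Hpos H0 Hx).
    pose proof (pow2_ge_0 (h1 - x * pick (snd c1) sgm sgp)).
    fold mu. lra.
Qed.

End PairMaxima.

Lemma third_function_below (f g1 g2 : R -> R) (pistar m p1 p2 : R) :
  quasiconvex f -> quasiconvex g1 -> quasiconvex g2 ->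
  g1 pistar <= m -> g2 pistar <= m ->
  (forall x, g1 x <= m -> g2 x <= m -> x = pistar) ->
  f p1 <= m -> g1 p1 <= m -> f p2 <= m -> g2 p2 <= m ->
  f pistar <= m.
Proof.
  intros Hf Hg1 Hg2 H1 H2 Huniq Hf1 Hg11 Hf2 Hg22.
  destruct (between_trichotomy pistar p1 p2) as [B | [B | B]].
  - exact (Hf _ _ _ _ B Hf1 Hf2).
  - (* p1 lies between pistar and p2, so g2 p1 <= m and p1 = pistar *)
    assert (p1 = pistar) as -> by (apply Huniq; [| apply (Hg2 pistar p1 p2)]; assumption).
    exact Hf1.
  - assert (p2 = pistar) as -> by (apply Huniq; [apply (Hg1 pistar p2 p1) |]; assumption).
    exact Hf2.
Qed.

(* On D, F(pi, ., .) is dominated by its value at some corner: each square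
   (c - pi t)^2 is quasiconvex in t (it is F(t, pi, 0) with h1 = 0), so on an
   interval it is maximal at an endpoint. *)
Lemma square_endpoint_bound c p lo hi t :
  lo <= t <= hi -> (c - p * t) ^ 2 <= Rmax ((c - p * lo) ^ 2) ((c - p * hi) ^ 2).
Proof.
  intros Ht.
  assert (E : forall s, (c - p * s) ^ 2 = F c 0 s p 0) by (intros; unfold F; ring).
  rewrite !E. apply (F_quasiconvex c 0 p 0 lo t hi); [left; exact Ht | apply Rmax_l | apply Rmax_r].
Qed.

Lemma corner_dominates mum mup sgm sgp h0 h1 p mu sg :
  mum <= mu <= mup -> sgm <= sg <= sgp ->
  exists k, F h0 h1 p mu sg <= f_corner mum mup sgm sgp h0 h1 k p.
Proof.
  intros Hm Hs.
  pose proof (square_endpoint_bound h0 p mum mup mu Hm) as A.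
  pose proof (square_endpoint_bound h1 p sgm sgp sg Hs) as B.
  unfold Rmax in A, B.
  destruct (Rle_dec ((h0 - p * mum) ^ 2) ((h0 - p * mup) ^ 2));
  destruct (Rle_dec ((h1 - p * sgm) ^ 2) ((h1 - p * sgp) ^ 2));
    [exists (true, true) | exists (true, false) | exists (false, true) | exists (false, false)];
    unfold f_corner, F; simpl; lra.
Qed.

Lemma corner_dec (a b : corner) : {a = b} + {a <> b}.
Proof. decide equality; apply Bool.bool_dec. Defined.

Lemma max_over_D_ge_pair mum mup sgm sgp h0 h1 c1 c2 pi v :
  mum < mup -> sgm < sgp -> is_max_over_D mum mup sgm sgp h0 h1 pi v ->
  f_pair mum mup sgm sgp h0 h1 c1 c2 pi <= v.
Proof.
  intros Hmu Hsg [_ Hv].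
  apply Rmax_lub; apply Hv; apply pick_between; assumption.
Qed.

Lemma pair_is_max_over_D mum mup sgm sgp h0 h1 c1 c2 pi :
  mum < mup -> sgm < sgp ->
  (forall k, f_corner mum mup sgm sgp h0 h1 k pi <= f_pair mum mup sgm sgp h0 h1 c1 c2 pi) ->
  is_max_over_D mum mup sgm sgp h0 h1 pi (f_pair mum mup sgm sgp h0 h1 c1 c2 pi).
Proof.
  intros Hmu Hsg Hk. split.
  - unfold f_pair, Rmax at 1. destruct (Rle_dec _ _); [set (c := c2) | set (c := c1)];
      exists (pick (fst c) mum mup), (pick (snd c) sgm sgp);
      repeat split; try apply pick_between; assumption.
  - intros mu sg Hm Hs.
    destruct (corner_dominates mum mup sgm sgp h0 h1 pi mu sg Hm Hs) as [k Hk'].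
    eapply Rle_trans; [exact Hk' | apply Hk].
Qed.

Lemma Rmax_le_inv a b m : Rmax a b <= m -> a <= m /\ b <= m.
Proof. intros H; split; eapply Rle_trans; [apply Rmax_l | exact H | apply Rmax_r | exact H]. Qed.

Lemma corners_below_optimal_pair mum mup sgm sgp h0 h1 cs1 cs2 pistar :
  0 < mum -> mum < mup ->
  is_minimizer (f_pair mum mup sgm sgp h0 h1 cs1 cs2) pistar ->
  (forall (c1 c2 : corner) (p : R), c1 <> c2 ->
      is_minimizer (f_pair mum mup sgm sgp h0 h1 c1 c2) p ->
      f_pair mum mup sgm sgp h0 h1 c1 c2 p <= f_pair mum mup sgm sgp h0 h1 cs1 cs2 pistar) ->
  forall k, f_corner mum mup sgm sgp h0 h1 k pistar <= f_pair mum mup sgm sgp h0 h1 cs1 cs2 pistar.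
Proof.
  intros Hmu0 Hmu Hpistar Hmaxpair k.
  destruct (corner_dec k cs1) as [-> | n1]; [apply Rmax_l |].
  destruct (corner_dec k cs2) as [-> | n2]; [apply Rmax_r |].
  destruct (f_pair_minimizer_exists mum mup sgm sgp h0 h1 Hmu0 Hmu k cs1) as [p1 Hp1].
  destruct (f_pair_minimizer_exists mum mup sgm sgp h0 h1 Hmu0 Hmu k cs2) as [p2 Hp2].
  destruct (Rmax_le_inv _ _ _ (Hmaxpair _ _ _ n1 Hp1)) as [Hk1 H11].
  destruct (Rmax_le_inv _ _ _ (Hmaxpair _ _ _ n2 Hp2)) as [Hk2 H22].
  set (fc := f_corner mum mup sgm sgp h0 h1).
  apply (third_function_below (fc k) (fc cs1) (fc cs2) pistar _ p1 p2);
    try apply f_corner_quasiconvex;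
    try assumption; [apply Rmax_l | apply Rmax_r |].
  (* pistar is the only point where both corners of the pair are <= m *)
  intros x Hx1 Hx2.
  apply (midconvex_minimizer_unique _ _ _
           (f_pair_strictly_midconvex _ _ _ _ h0 h1 Hmu0 Hmu cs1 cs2) Hpistar).
  apply Rmax_lub; assumption.
Qed.

Theorem mainTheorem13
  (mum mup sgm sgp h0 h1 : R)
  (Hmu0 : 0 < mum) (Hmu : mum < mup) (Hsg0 : 0 < sgm) (Hsg : sgm < sgp)
  (cs1 cs2 : corner) (Hdist : cs1 <> cs2)
  (pistar : R)
  (Hpistar : is_minimizer (f_pair mum mup sgm sgp h0 h1 cs1 cs2) pistar)
  (Hmaxpair : forall (c1 c2 : corner) (p : R), c1 <> c2 ->
      is_minimizer (f_pair mum mup sgm sgp h0 h1 c1 c2) p ->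
      f_pair mum mup sgm sgp h0 h1 c1 c2 p <= f_pair mum mup sgm sgp h0 h1 cs1 cs2 pistar) :
  exists vstar : R,
    is_max_over_D mum mup sgm sgp h0 h1 pistar vstar /\
    (forall pi v, is_max_over_D mum mup sgm sgp h0 h1 pi v -> vstar <= v) /\
    (forall pi v, is_max_over_D mum mup sgm sgp h0 h1 pi v -> v <= vstar -> pi = pistar).
Proof.
  exists (f_pair mum mup sgm sgp h0 h1 cs1 cs2 pistar). split; [| split].
  -
    apply pair_is_max_over_D; try assumption.
    apply corners_below_optimal_pair; assumption.
  - (* at any pi the maximum over D dominates f_{cs1 cs2}(pi) >= its minimum *)
    intros pi v Hv. eapply Rle_trans; [apply Hpistar |].
    exact (max_over_D_ge_pair _ _ _ _ _ _ cs1 cs2 _ _ Hmu Hsg Hv).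
  - (* equality forces pi to minimize f_{cs1 cs2}, whose minimizer is unique *)
    intros pi v Hv Hle.
    apply (midconvex_minimizer_unique _ _ _
             (f_pair_strictly_midconvex _ _ _ _ h0 h1 Hmu0 Hmu cs1 cs2) Hpistar).
    eapply Rle_trans; [exact (max_over_D_ge_pair _ _ _ _ _ _ cs1 cs2 _ _ Hmu Hsg Hv) | exact Hle].
Qed.
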